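(* With $\mathcal I$, $\nu$, $L$, $V_L^*$, $q_{L-1}$, $V_{L-1}^*$ and $\xi$ as defined in the context, for every $\mathbf m\in\mathbb R^{\mathcal I}$ and $a\in\mathcal I$, $$q_{L-1}(\mathbf m,a)=\frac{\xi(a;\mathbf m)}{\sum_{l\in\mathcal I}e^{m[l]}},$$ and consequently $$V_{L-1}^*(\mathbf m)=\frac{1}{\sum_{l\in\mathcal I}e^{m[l]}}\Big[e^{m[x_{[1]}]}+h(\nu)\exp\Big\{\frac{m[x_{[2]}]-\nu m[x_{[1]}]}{1-\nu}\Big\}\Big],$$ where $m[x_{[1]}]\ge m[x_{[2]}]$ are the largest and second-largest entries of $\mathbf m$ (counted with multiplicity).
   Context: $\mathcal I$ is a finite set with $|\mathcal I|\ge2$, $\nu\in(0,1)$, $J(y)=(1-\nu)y+\ln\nu$. $V_L^*(\mathbf m)=\max_{a\in\mathcal I}e^{m[a]}/\sum_{l}e^{m[l]}$; $q_{L-1}(\mathbf m,a)=\int_0^\infty V_L^*(\mathbf m+J(y)\boldsymbol\delta[a])\,f(y\mid\mathbf m,a)\,dy$ with $\boldsymbol\delta[a]$ the indicator vector of $a$ and $f(y\mid\mathbf m,a)=p_a\nu e^{-\nu y}+(1-p_a)e^{-y}$, $p_a=e^{m[a]}/\sum_l e^{m[l]}$; $V_{L-1}^*(\mathbf m)=\max_a q_{L-1}(\mathbf m,a)$. With $M_a=\max_{\hat a\neq a}m[\hat a]$: $\xi(a;\mathbf m)=e^{m[a]}$ if $M_a-m[a]<\ln\nu$, and otherwise $\xi(a;\mathbf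 m)=e^{M_a}+h(\nu)\exp\{\frac{m[a]-\nu M_a}{1-\nu}\}$, where $h(\nu)=\exp\{\frac{\nu\ln\nu}{1-\nu}\}-\exp\{\frac{\ln\nu}{1-\nu}\}$. *)

From Stdlib Require Import Reals List ClassicalEpsilon.
Import ListNotations.
Open Scope R_scope.

Section Defs.
(* The finite index set I is given by a type with decidable equality and a
   duplicate-free complete enumeration [enum]. *)
Variable I : Type.
Variable eq_dec : forall x y : I, {x = y} + {x <> y}.
Variable enum : list I.

Definition sumI (f : I -> R) : R := fold_right (fun l acc => f l + acc) 0 enum.

(* maximum of f over a nonempty list (0 on the empty list, never used) *)
Definition maxl (f : I -> R) (s : list I) : R :=
  match s with
  | [] => 0
  | x :: r => fold_right (fun y acc => Rmax (f y) acc) (f x) r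
  end.

Definition maxI (f : I -> R) : R := maxl f enum.

Definition shift (m : I -> R) (a : I) (c : R) : I -> R :=
  fun l => if eq_dec l a then m l + c else m l.

Definition J (nu y : R) : R := (1 - nu) * y + ln nu.

Definition pA (m : I -> R) (a : I) : R := exp (m a) / sumI (fun l => exp (m l)).

Definition V_L (m : I -> R) : R :=
  maxI (fun a => exp (m a) / sumI (fun l => exp (m l))).

Definition fdens (nu : R) (m : I -> R) (a : I) (y : R) : R :=
  pA m a * nu * exp (- nu * y) + (1 - pA m a) * exp (- y).

Definition improper_integral_0_inf (f : R -> R) (l : R) : Prop :=
  (forall T, 0 <= T -> inhabited (Riemann_integrable f 0 T)) /\
  (forall eps, eps > 0 -> exists M, forall T (pr : Riemann_integrable f 0 T),
      T >= M -> Rabs (RiemannInt pr - l) < eps).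

Definition Int_0_inf (f : R -> R) : R :=
  epsilon (inhabits 0) (improper_integral_0_inf f).

Definition q_Lm1 (nu : R) (m : I -> R) (a : I) : R :=
  Int_0_inf (fun y => V_L (shift m a (J nu y)) * fdens nu m a y).

Definition V_Lm1 (nu : R) (m : I -> R) : R := maxI (fun a => q_Lm1 nu m a).

Definition M_other (m : I -> R) (a : I) : R :=
  maxl m (filter (fun b => if eq_dec b a then false else true) enum).

Definition h (nu : R) : R :=
  exp (nu * ln nu / (1 - nu)) - exp (ln nu / (1 - nu)).

Definition xi (nu : R) (m : I -> R) (a : I) : R :=
  if Rlt_dec (M_other m a - m a) (ln nu) then exp (m a)
  else exp (M_other m a) + h nu * exp ((m a - nu * M_other m a) / (1 - nu)).

End Defs.

(* Fix an action a and write S = sum_l e^{m[l]}, M = M_a.  Shifting m[a] by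
   J(y) rescales the normalising sum to S', and the density f(y | m, a) is
   exactly e^{-y} S' / S.  Since V_L^*(m') = max(e^{m'[a]}, e^{M}) / S', the
   integrand of q_{L-1}(m, a) collapses to the "envelope"
        max(e^{M - y}, e^{m[a] + ln nu - nu y}) / S,
   a maximum of two decaying exponentials which cross at
   y0 = (M - m[a] - ln nu) / (1 - nu).  Integrating the two pieces and
   passing to the improper limit gives xi(a; m) / S (the two cases of xi are
   y0 < 0 and y0 >= 0).  For V_{L-1}^* one maximises xi over a: every
   non-top action b has xi(b) = e^{m[x1]} + h(nu) e^{(m[b] - nu m[x1])/(1-nu)},
   largest at the runner-up x2, and the top action x1 does no better; the
   latter is a one-variable inequality G(d) >= 0 on [0, -ln nu] that follows
   from G(0) = 0, G(-ln nu) >= 0 and the fact that G' changes sign at most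
   once (from + to -). *)

From Coquelicot Require Import Coquelicot.
From Stdlib Require Import Reals List Lra Lia ClassicalEpsilon FunctionalExtensionality.
Open Scope R_scope.

Lemma exp_le (x y : R) : x <= y -> exp x <= exp y.
Proof. intros [H|<-]; [left; apply exp_increasing, H | apply Rle_refl]. Qed.

Section ListMax.
Variable I : Type.

Lemma maxl_ub (f : I -> R) (s : list I) (x : I) : In x s -> f x <= maxl I f s.
Proof.
  destruct s as [|x0 r]; [intros []|]; simpl.
  assert (Hge : f x0 <= fold_right (fun y acc => Rmax (f y) acc) (f x0) r /\
    forall z, In z r -> f z <= fold_right (fun y acc => Rmax (f y) acc) (f x0) r).
  { induction r as [|z r [IH1 IH2]]; simpl; [split; [lra | tauto]|].
    split; [eapply Rle_trans; [exact IH1 | apply Rmax_r]|].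
    intros w [<-|Hw]; [apply Rmax_l|].
    eapply Rle_trans; [exact (IH2 w Hw) | apply Rmax_r]. }
  destruct Hge as [Hhead Htail]; intros [<-|Hx]; [exact Hhead | exact (Htail x Hx)].
Qed.

Lemma maxl_attained (f : I -> R) (s : list I) : s <> nil -> exists x, In x s /\ maxl I f s = f x.
Proof.
  destruct s as [|x0 r]; [congruence|]; intros _; simpl.
  induction r as [|z r [x [Hx Hm]]]; simpl; [exists x0; auto|].
  unfold Rmax at 1; destruct Rle_dec.
  - exists x; split; [destruct Hx; auto | exact Hm].
  - exists z; auto.
Qed.

Lemma maxl_spec (f : I -> R) (s : list I) (y : R) :
  (exists x, In x s /\ f x = y) -> (forall x, In x s -> f x <= y) -> maxl I f s = y.
Proof.
  intros [x [Hx <-]] Hub.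
  destruct (maxl_attained f s) as [x0 [Hx0 Hmax]]; [intros ->; destruct Hx|].
  apply Rle_antisym; [rewrite Hmax; apply Hub, Hx0 | apply maxl_ub, Hx].
Qed.

Lemma maxl_ext (f g : I -> R) (s : list I) :
  (forall x, In x s -> f x = g x) -> maxl I f s = maxl I g s.
Proof.
  intros Hfg; destruct s as [|x0 r]; [reflexivity|].
  apply maxl_spec.
  - destruct (maxl_attained g (x0 :: r)) as [x [Hx ->]]; [discriminate|].
    exists x; auto.
  - intros x Hx; rewrite Hfg by exact Hx; apply maxl_ub, Hx.
Qed.
End ListMax.

Section Sums.
Variables (I : Type) (enum : list I).

Lemma sumI_pos (f : I -> R) : enum <> nil -> (forall l, 0 < f l) -> 0 < sumI I enum f.
Proof.
  unfold sumI; intros Hne Hf; destruct enum as [|x r]; [congruence|]; simpl; clear Hne.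
  enough (0 <= fold_right (fun l acc => f l + acc) 0 r) by (specialize (Hf x); lra).
  induction r as [|z r IH]; simpl; [lra | specialize (Hf z); lra].
Qed.

Lemma sumI_update (f g : I -> R) (a : I) : NoDup enum -> In a enum ->
  (forall l, l <> a -> g l = f l) -> sumI I enum g = sumI I enum f - f a + g a.
Proof.
  unfold sumI; intros Hnd; induction Hnd as [|x r Hx Hnd IH]; simpl; [tauto|].
  intros [<-|Ha] Hg.
  - assert (Hrest : fold_right (fun l acc => g l + acc) 0 r =
                    fold_right (fun l acc => f l + acc) 0 r).
    { clear IH Hnd; induction r as [|z r IHr]; simpl; [reflexivity|].
      rewrite Hg, IHr; [reflexivity | |]; intros Hin; apply Hx; simpl; auto. }
    rewrite Hrest; ring.
  - rewrite (IH Ha Hg), Hg; [ring|]; intros ->; contradiction.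
Qed.
End Sums.

Lemma improper_integral_unique (f : R -> R) (l1 l2 : R) :
  improper_integral_0_inf f l1 -> improper_integral_0_inf f l2 -> l1 = l2.
Proof.
  intros [Hint H1] [_ H2]; destruct (Req_dec l1 l2) as [|Hne]; [assumption|exfalso].
  set (e := Rabs (l1 - l2) / 2).
  assert (He : e > 0) by (unfold e; assert (Rabs (l1 - l2) > 0) by (apply Rabs_pos_lt; lra); lra).
  destruct (H1 e He) as [M1 HM1], (H2 e He) as [M2 HM2].
  set (T := Rmax 0 (Rmax M1 M2)).
  assert (HT0 : 0 <= T) by apply Rmax_l.
  assert (HT1 : T >= M1) by (apply Rle_ge, (Rle_trans _ _ _ (Rmax_l M1 M2)), Rmax_r).
  assert (HT2 : T >= M2) by (apply Rle_ge, (Rle_trans _ _ _ (Rmax_r M1 M2)), Rmax_r).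
  destruct (Hint T HT0) as [pr].
  specialize (HM1 T pr HT1); specialize (HM2 T pr HT2).
  assert (Rabs (l1 - l2) <= Rabs (RiemannInt pr - l1) + Rabs (RiemannInt pr - l2)).
  { replace (l1 - l2) with (- (RiemannInt pr - l1) + (RiemannInt pr - l2)) by ring.
    rewrite <- (Rabs_Ropp (RiemannInt pr - l1)); apply Rabs_triang. }
  unfold e in *; lra.
Qed.

Lemma Int_0_inf_eq (f : R -> R) (l : R) : improper_integral_0_inf f l -> Int_0_inf f = l.
Proof.
  intros H; apply (improper_integral_unique f); [unfold Int_0_inf|exact H].
  apply epsilon_spec; exists l; exact H.
Qed.

Lemma improper_integral_of_tail (f : R -> R) (l C nu T0 : R) : 0 < nu ->
  (forall T, T0 <= T -> is_RInt f 0 T (l - C * exp (- nu * T))) ->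
  improper_integral_0_inf f l.
Proof.
  intros Hnu Hint; split.
  - intros T HT; constructor; apply ex_RInt_Reals_0.
    apply (ex_RInt_Chasles_1 (V := R_CompleteNormedModule) _ 0 T (Rmax T T0));
      [split; [exact HT | apply Rmax_l]|].
    eexists; apply Hint, Rmax_r.
  - intros eps Heps.
    set (T1 := ln ((Rabs C + 1) / eps) / nu).
    assert (Hdecay : forall T, T1 <= T -> exp (- nu * T) <= eps / (Rabs C + 1)).
    { intros T HT.
      assert (Hpos : 0 < (Rabs C + 1) / eps)
        by (apply Rdiv_lt_0_compat; [pose proof (Rabs_pos C)|]; lra).
      replace (eps / (Rabs C + 1)) with (exp (- ln ((Rabs C + 1) / eps)))
        by (rewrite exp_Ropp, exp_ln by exact Hpos; field; pose proof (Rabs_pos C); lra).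
      apply exp_le.
      enough (ln ((Rabs C + 1) / eps) <= nu * T) by lra.
      unfold T1 in HT; apply (Rmult_le_compat_l nu) in HT; [|lra].
      replace (nu * (ln ((Rabs C + 1) / eps) / nu)) with (ln ((Rabs C + 1) / eps)) in HT
        by (field; lra).
      exact HT. }
    exists (Rmax T0 T1); intros T pr HT.
    rewrite <- RInt_Reals,
      (is_RInt_unique _ _ _ _ (Hint T (Rle_trans _ _ _ (Rmax_l _ _) (Rge_le _ _ HT)))).
    replace (l - C * exp (- nu * T) - l) with (- (C * exp (- nu * T))) by ring.
    rewrite Rabs_Ropp, Rabs_mult, (Rabs_pos_eq (exp _)) by (left; apply exp_pos).
    pose proof (Hdecay T (Rle_trans _ _ _ (Rmax_r _ _) (Rge_le _ _ HT))) as Hd.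
    pose proof (Rabs_pos C).
    apply Rle_lt_trans with (Rabs C * (eps / (Rabs C + 1))); [apply Rmult_le_compat_l; lra|].
    apply Rlt_le_trans with ((Rabs C + 1) * (eps / (Rabs C + 1))); [|right; field; lra].
    apply Rmult_lt_compat_r; [apply Rdiv_lt_0_compat|]; lra.
Qed.

Lemma is_RInt_exp_affine (c k S a b : R) : k <> 0 -> S <> 0 ->
  is_RInt (fun y => exp (c - k * y) / S) a b ((exp (c - k * a) - exp (c - k * b)) / (k * S)).
Proof.
  intros Hk HS.
  replace ((exp (c - k * a) - exp (c - k * b)) / (k * S)) with
    (minus (- exp (c - k * b) / (k * S)) (- exp (c - k * a) / (k * S)))
    by (unfold minus, plus, opp; simpl; field; auto).
  apply (is_RInt_derive (fun y => - exp (c - k * y) / (k * S))).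
  - intros x _; auto_derive; [trivial|].
    replace (c + - (k * x)) with (c - k * x) by ring; field; auto.
  - intros x _; apply (ex_derive_continuous (K := R_AbsRing) (V := R_NormedModule)).
    auto_derive; trivial.
Qed.

Lemma is_RInt_ext_open (f g : R -> R) (a b l : R) : a <= b ->
  (forall x, a < x < b -> f x = g x) -> is_RInt g a b l -> is_RInt f a b l.
Proof.
  intros Hab He; apply is_RInt_ext.
  rewrite Rmin_left, Rmax_right by exact Hab; intros x Hx; symmetry; auto.
Qed.

(* The envelope max(e^{M-y}, e^{K - nu y}) / S of two decaying exponentials;
   it will turn out to be the integrand of q_{L-1}. *)
Definition envelope (M K S nu y : R) : R := Rmax (exp (M - y)) (exp (K - nu * y)) / S.

Section Envelope.
Variables M K S nu : R.
Hypothesis Hnu : 0 < nu < 1.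
Hypothesis HS : 0 < S.

Definition crossing : R := (M - K) / (1 - nu).

Lemma crossing_compare (y : R) : M - y - (K - nu * y) = (1 - nu) * (crossing - y).
Proof. unfold crossing; field; lra. Qed.

Lemma envelope_left (y : R) : y <= crossing -> envelope M K S nu y = exp (M - y) / S.
Proof.
  intros Hy; unfold envelope; rewrite Rmax_left; [reflexivity|].
  apply exp_le; pose proof (crossing_compare y); nra.
Qed.

Lemma envelope_right (y : R) : crossing <= y -> envelope M K S nu y = exp (K - nu * y) / S.
Proof.
  intros Hy; unfold envelope; rewrite Rmax_right; [reflexivity|].
  apply exp_le; pose proof (crossing_compare y); nra.
Qed.

Definition envelope_integral : R :=
  let y1 := Rmax 0 crossing in
  (exp M - exp (M - y1) + exp (K - nu * y1) / nu) / S.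

Lemma envelope_RInt (T : R) : Rmax 0 crossing <= T ->
  is_RInt (envelope M K S nu) 0 T (envelope_integral - exp K / (nu * S) * exp (- nu * T)).
Proof.
  intros HT; set (y1 := Rmax 0 crossing) in *.
  assert (H0y1 : 0 <= y1) by apply Rmax_l.
  assert (Hcy1 : crossing <= y1) by apply Rmax_r.
  replace (envelope_integral - exp K / (nu * S) * exp (- nu * T)) with
    (plus ((exp (M - 1 * 0) - exp (M - 1 * y1)) / (1 * S))
          ((exp (K - nu * y1) - exp (K - nu * T)) / (nu * S))).
  - apply (is_RInt_Chasles (V := R_NormedModule) _ 0 y1 T).
    + apply (is_RInt_ext_open _ (fun y => exp (M - 1 * y) / S)); [exact H0y1| |].
      * intros x Hx; rewrite Rmult_1_l, envelope_left; [reflexivity|].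
        unfold y1, Rmax in Hx; destruct Rle_dec in Hx; lra.
      * apply is_RInt_exp_affine; lra.
    + apply (is_RInt_ext_open _ (fun y => exp (K - nu * y) / S)); [exact HT| |].
      * intros x Hx; apply envelope_right; lra.
      * apply is_RInt_exp_affine; lra.
  - unfold envelope_integral, plus; simpl; fold y1.
    replace (K - nu * T) with (K + - nu * T) by ring; rewrite exp_plus.
    rewrite !Rmult_1_l, Rminus_0_r; field; lra.
Qed.

Lemma envelope_improper : improper_integral_0_inf (envelope M K S nu) envelope_integral.
Proof.
  apply (improper_integral_of_tail _ _ (exp K / (nu * S)) nu (Rmax 0 crossing)); [lra|].
  exact envelope_RInt.
Qed.
End Envelope.

Lemma single_crossing_above_endpoints (f f' : R -> R) (a b d : R) :
  (forall x, derivable_pt_lim f x (f' x)) ->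
  (forall x y, a < x -> x < y -> y < b -> f' x < 0 -> f' y <= 0) ->
  a <= d <= b -> Rmin (f a) (f b) <= f d.
Proof.
  intros Hder Hsign Hd.
  destruct (Rle_lt_dec (Rmin (f a) (f b)) (f d)) as [|Hlt]; [assumption|exfalso].
  pose proof (Rmin_l (f a) (f b)); pose proof (Rmin_r (f a) (f b)).
  assert (Had : a < d) by (destruct (Req_dec a d) as [<-|]; lra).
  assert (Hdb : d < b) by (destruct (Req_dec d b) as [->|]; lra).
  destruct (MVT_cor2 f f' a d Had (fun x _ => Hder x)) as [x [Ex Hx]].
  destruct (MVT_cor2 f f' d b Hdb (fun y _ => Hder y)) as [y [Ey Hy]].
  assert (f' x < 0) by nra.
  assert (0 < f' y) by nra.
  pose proof (Hsign x y ltac:(lra) ltac:(lra) ltac:(lra) ltac:(assumption)); lra.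
Qed.

(* The one-variable inequality behind the optimality of the runner-up:
   with k > 1 and h >= 0,  gap(d) = e^d + h e^{-(k-1)d} - 1 - h e^{kd}
   is nonnegative on [0, c] as soon as gap(c) >= 0. *)
Section KeyInequality.
Variables k h : R.
Hypothesis Hk : 1 < k.
Hypothesis Hh : 0 <= h.

Definition gap (d : R) : R := exp d + h * exp (- (k - 1) * d) - 1 - h * exp (k * d).
Definition gap_deriv (d : R) : R := exp d - h * (k - 1) * exp (- (k - 1) * d) - h * k * exp (k * d).

(* gap_deriv = e^d (1 - slope), with slope nondecreasing on [0, +oo). *)
Definition slope (d : R) : R := h * (k - 1) * exp (- k * d) + h * k * exp ((k - 1) * d).
Definition slope_deriv (d : R) : R := h * k * (k - 1) * (exp ((k - 1) * d) - exp (- k * d)).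

Lemma gap_derivative (d : R) : derivable_pt_lim gap d (gap_deriv d).
Proof. apply is_derive_Reals; unfold gap, gap_deriv; auto_derive; trivial; ring. Qed.

Lemma slope_derivative (d : R) : derivable_pt_lim slope d (slope_deriv d).
Proof. apply is_derive_Reals; unfold slope, slope_deriv; auto_derive; trivial; ring. Qed.

Lemma gap_deriv_factor (d : R) : gap_deriv d = exp d * (1 - slope d).
Proof.
  unfold gap_deriv, slope.
  replace (- (k - 1) * d) with (d + - k * d) by ring.
  replace (k * d) with (d + (k - 1) * d) by ring.
  rewrite !exp_plus; ring.
Qed.

Lemma slope_nondecreasing (x y : R) : 0 <= x -> x < y -> slope x <= slope y.
Proof.
  intros Hx Hxy.
  destruct (MVT_cor2 slope slope_deriv x y Hxy (fun z _ => slope_derivative z)) as [z [Ez Hz]].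
  enough (0 <= slope_deriv z) by nra.
  unfold slope_deriv; apply Rmult_le_pos; [apply Rmult_le_pos; [apply Rmult_le_pos|]; lra|].
  enough (exp (- k * z) <= exp ((k - 1) * z)) by lra.
  apply exp_le; nra.
Qed.

Lemma gap_nonneg (c d : R) : 0 <= gap c -> 0 <= d <= c -> 0 <= gap d.
Proof.
  intros Hc Hd.
  apply (Rle_trans _ (Rmin (gap 0) (gap c))).
  - apply Rmin_glb; [|exact Hc].
    unfold gap; rewrite !Rmult_0_r, exp_0; lra.
  - apply (single_crossing_above_endpoints gap gap_deriv); [exact gap_derivative| |exact Hd].
    intros x y Hx Hxy _; rewrite !gap_deriv_factor; intros Hneg.
    pose proof (exp_pos x); pose proof (exp_pos y).
    pose proof (slope_nondecreasing x y ltac:(lra) Hxy).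
    assert (1 < slope x) by nra.
    nra.
Qed.
End KeyInequality.

Lemma ln_nu_neg (nu : R) : 0 < nu < 1 -> ln nu < 0.
Proof. intros Hnu; rewrite <- ln_1; apply ln_increasing; lra. Qed.

Lemma h_nonneg (nu : R) : 0 < nu < 1 -> 0 <= h nu.
Proof.
  intros Hnu; pose proof (ln_nu_neg nu Hnu).
  unfold h; enough (exp (ln nu / (1 - nu)) <= exp (nu * ln nu / (1 - nu))) by lra.
  apply exp_le; unfold Rdiv; apply Rmult_le_compat_r; [left; apply Rinv_0_lt_compat|]; nra.
Qed.

Definition xi_tail (nu M x : R) : R := exp M + h nu * exp ((x - nu * M) / (1 - nu)).

Lemma xi_tail_ge (nu M x : R) : 0 < nu < 1 -> exp M <= xi_tail nu M x.
Proof.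
  intros Hnu; unfold xi_tail; pose proof (h_nonneg nu Hnu).
  pose proof (exp_pos ((x - nu * M) / (1 - nu))); nra.
Qed.

Lemma xi_tail_mono (nu M x x' : R) : 0 < nu < 1 -> x <= x' -> xi_tail nu M x <= xi_tail nu M x'.
Proof.
  intros Hnu Hx; unfold xi_tail; apply Rplus_le_compat_l, Rmult_le_compat_l; [apply h_nonneg, Hnu|].
  apply exp_le; unfold Rdiv; apply Rmult_le_compat_r; [left; apply Rinv_0_lt_compat|]; lra.
Qed.

(* Swapping the top value u and a value v within -ln nu below it does not
   increase xi_tail: this is gap(u - v) >= 0 with k = 1/(1-nu), h = h(nu),
   where gap(-ln nu) = (1 - nu) nu^{2 nu/(1-nu)} >= 0. *)
Lemma xi_tail_swap (nu u v : R) : 0 < nu < 1 -> v <= u <= v - ln nu ->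
  xi_tail nu v u <= xi_tail nu u v.
Proof.
  intros Hnu Huv.
  set (k := 1 / (1 - nu)); set (c := - ln nu); set (d := u - v).
  assert (Hk : 1 < k).
  { unfold k; apply (Rmult_lt_reg_r (1 - nu)); [lra|]; field_simplify; lra. }
  set (P := exp (nu * ln nu / (1 - nu))).
  assert (HP : 0 < P) by apply exp_pos.
  assert (Hh : h nu = (1 - nu) * P).
  { unfold h; fold P.
    replace (ln nu / (1 - nu)) with (ln nu + nu * ln nu / (1 - nu)) by (field; lra).
    rewrite exp_plus, exp_ln by lra; fold P; ring. }
  assert (Hc : 0 <= gap k (h nu) c).
  { unfold gap.
    replace (exp (- (k - 1) * c)) with P by (unfold P, c, k; f_equal; field; lra).
    replace (exp (k * c)) with (/ (nu * P))
      by (unfold P, c, k; rewrite <- (exp_ln nu) at 1 by lra; rewrite <- exp_plus, <- exp_Ropp;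
          f_equal; field; lra).
    replace (exp c) with (/ nu) by (unfold c; rewrite exp_Ropp, exp_ln; lra).
    rewrite Hh; replace (/ nu + (1 - nu) * P * P - 1 - (1 - nu) * P * / (nu * P))
      with ((1 - nu) * P * P) by (field; lra).
    apply Rmult_le_pos; [apply Rmult_le_pos|]; lra. }
  pose proof (gap_nonneg k (h nu) Hk (h_nonneg nu Hnu) c d Hc ltac:(unfold c, d; lra)) as Hd.
  unfold xi_tail, gap in *.
  replace ((u - nu * v) / (1 - nu)) with (v + k * d) by (unfold k, d; field; lra).
  replace ((v - nu * u) / (1 - nu)) with (v + - (k - 1) * d) by (unfold k, d; field; lra).
  replace (exp u) with (exp v * exp d) by (rewrite <- exp_plus; unfold d; f_equal; ring).
  rewrite !exp_plus; pose proof (Rmult_le_pos _ _ (Rlt_le _ _ (exp_pos v)) Hd); lra.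
Qed.

(* Closed form of the envelope integral when K = x + ln nu: this is the
   case split of xi (y0 < 0 exactly when M - x < ln nu), divided by S. *)
Lemma envelope_integral_closed_form (M x S nu : R) : 0 < nu < 1 -> 0 < S ->
  envelope_integral M (x + ln nu) S nu =
  (if Rlt_dec (M - x) (ln nu) then exp x else xi_tail nu M x) / S.
Proof.
  intros Hnu HS; unfold envelope_integral, crossing.
  destruct (Rlt_dec (M - x) (ln nu)) as [Hlt|Hge].
  - rewrite Rmax_left by (unfold Rdiv; apply Rmult_le_0_r;
      [lra | left; apply Rinv_0_lt_compat; lra]).
    rewrite Rmult_0_r, !Rminus_0_r, exp_plus, exp_ln by lra; field; lra.
  - rewrite Rmax_right by (apply Rdiv_le_0_compat; lra).
    set (z := (x - nu * M) / (1 - nu)).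
    replace (M - (M - (x + ln nu)) / (1 - nu)) with (ln nu / (1 - nu) + z)
      by (unfold z; field; lra).
    replace (x + ln nu - nu * ((M - (x + ln nu)) / (1 - nu)))
      with (ln nu + (nu * ln nu / (1 - nu) + z)) by (unfold z; field; lra).
    unfold xi_tail, h; fold z; rewrite !exp_plus, exp_ln by lra; field; lra.
Qed.

Section Model.
Variable I : Type.
Variable eq_dec : forall x y : I, {x = y} + {x <> y}.
Variable enum : list I.
Hypothesis Hnodup : NoDup enum.
Hypothesis Hcomplete : forall x : I, In x enum.
Hypothesis Hcard : (2 <= length enum)%nat.
Variable nu : R.
Hypothesis Hnu : 0 < nu < 1.

Local Notation partition m := (sumI I enum (fun l => exp (m l))).

Lemma partition_pos (m : I -> R) : 0 < partition m.
Proof.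
  apply sumI_pos; [|intros; apply exp_pos].
  intros E; rewrite E in Hcard; simpl in Hcard; lia.
Qed.

Lemma exists_other (a : I) : exists b, b <> a.
Proof.
  destruct enum as [|x [|y r]]; simpl in Hcard; try lia.
  inversion Hnodup as [|? ? Hxy]; subst.
  assert (x <> y) by (intros ->; apply Hxy; simpl; auto).
  destruct (eq_dec x a) as [->|]; [exists y | exists x]; auto.
Qed.

Lemma in_others (a b : I) :
  In b (filter (fun b => if eq_dec b a then false else true) enum) <-> b <> a.
Proof.
  pose proof (Hcomplete b); rewrite filter_In; destruct (eq_dec b a); split; intuition congruence.
Qed.

Lemma M_other_ub (m : I -> R) (a b : I) : b <> a -> m b <= M_other I eq_dec enum m a.
Proof. intros Hb; apply maxl_ub, in_others, Hb. Qed.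

Lemma M_other_attained (m : I -> R) (a : I) : exists b, b <> a /\ m b = M_other I eq_dec enum m a.
Proof.
  destruct (maxl_attained I m (filter (fun b => if eq_dec b a then false else true) enum))
    as [b [Hb Hm]].
  - destruct (exists_other a) as [b Hb]; intros E.
    apply in_others in Hb; rewrite E in Hb; destruct Hb.
  - exists b; split; [apply in_others, Hb | symmetry; exact Hm].
Qed.

Lemma M_other_spec (m : I -> R) (a : I) (v : R) :
  (exists b, b <> a /\ m b = v) -> (forall b, b <> a -> m b <= v) ->
  M_other I eq_dec enum m a = v.
Proof.
  intros [b [Hb Hv]] Hub; apply maxl_spec.
  - exists b; split; [apply in_others, Hb | exact Hv].
  - intros x Hx; apply Hub, in_others, Hx.
Qed.

Lemma shift_at (m : I -> R) (a : I) (c : R) : shift I eq_dec m a c a = m a + c.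
Proof. unfold shift; destruct (eq_dec a a); congruence. Qed.

Lemma shift_other (m : I -> R) (a : I) (c : R) (l : I) : l <> a -> shift I eq_dec m a c l = m l.
Proof. unfold shift; destruct (eq_dec l a); congruence. Qed.

Lemma M_other_shift (m : I -> R) (a : I) (c : R) :
  M_other I eq_dec enum (shift I eq_dec m a c) a = M_other I eq_dec enum m a.
Proof. apply maxl_ext; intros l Hl; apply shift_other, in_others, Hl. Qed.

Lemma V_L_split (m : I -> R) (a : I) :
  V_L I enum m = Rmax (exp (m a)) (exp (M_other I eq_dec enum m a)) / partition m.
Proof.
  pose proof (partition_pos m) as HS.
  unfold V_L, maxI; apply maxl_spec.
  - destruct (Rle_dec (exp (M_other I eq_dec enum m a)) (exp (m a))) as [Hle|Hlt].
    + exists a; split; [apply Hcomplete | rewrite Rmax_left by exact Hle; reflexivity].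
    + destruct (M_other_attained m a) as [b [_ Hb]].
      exists b; split; [apply Hcomplete | rewrite Rmax_right, Hb by lra; reflexivity].
  - intros b _; apply Rmult_le_compat_r; [left; apply Rinv_0_lt_compat, HS|].
    destruct (eq_dec b a) as [->|Hb]; [apply Rmax_l|].
    eapply Rle_trans; [apply exp_le, M_other_ub, Hb | apply Rmax_r].
Qed.

Lemma fdens_ratio (m : I -> R) (a : I) (y : R) :
  fdens I enum nu m a y =
  exp (- y) * partition (shift I eq_dec m a (J nu y)) / partition m.
Proof.
  pose proof (partition_pos m) as HS.
  rewrite (sumI_update I enum (fun l => exp (m l)) _ a Hnodup (Hcomplete a))
    by (intros l Hl; rewrite shift_other by exact Hl; reflexivity).
  rewrite shift_at; unfold fdens, pA, J.
  replace (m a + ((1 - nu) * y + ln nu)) with (m a + ln nu + (1 - nu) * y) by ring.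
  replace (- nu * y) with (- y + (1 - nu) * y) by ring.
  rewrite !exp_plus, exp_ln by lra.
  field; lra.
Qed.

Lemma integrand_envelope (m : I -> R) (a : I) (y : R) :
  V_L I enum (shift I eq_dec m a (J nu y)) * fdens I enum nu m a y =
  envelope (M_other I eq_dec enum m a) (m a + ln nu) (partition m) nu y.
Proof.
  pose proof (partition_pos m) as HS.
  pose proof (partition_pos (shift I eq_dec m a (J nu y))) as HS'.
  rewrite (V_L_split _ a), M_other_shift, shift_at, fdens_ratio.
  transitivity (Rmax (exp (m a + J nu y)) (exp (M_other I eq_dec enum m a)) * exp (- y)
                / partition m); [field; lra|].
  rewrite Rmax_mult, Rmax_comm, <- !exp_plus by (left; apply exp_pos).
  unfold envelope, J; do 3 f_equal; ring.
Qed.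

Theorem q_closed_form (m : I -> R) (a : I) :
  q_Lm1 I eq_dec enum nu m a = xi I eq_dec enum nu m a / partition m.
Proof.
  unfold q_Lm1; rewrite (functional_extensionality _ _ (integrand_envelope m a)).
  rewrite (Int_0_inf_eq _ _ (envelope_improper _ _ _ _ Hnu (partition_pos m))).
  apply envelope_integral_closed_form; [exact Hnu | apply partition_pos].
Qed.

Section Ranked.
Variables (m : I -> R) (x1 x2 : I).
Hypothesis H12 : x1 <> x2.
Hypothesis Htop : forall b, m b <= m x1.
Hypothesis Hsecond : forall b, b <> x1 -> m b <= m x2.

(* A non-top action b has M_b = m[x1] >= m[b] > m[b] + ln nu, so xi(b)
   takes its second branch. *)
Lemma xi_non_top (b : I) : b <> x1 -> xi I eq_dec enum nu m b = xi_tail nu (m x1) (m b).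
Proof.
  intros Hb; unfold xi.
  rewrite (M_other_spec m b (m x1)) by (auto; exists x1; auto).
  destruct Rlt_dec as [Hlt|]; [|reflexivity].
  pose proof (Htop b); pose proof (ln_nu_neg nu Hnu); lra.
Qed.

Lemma xi_top_le : xi I eq_dec enum nu m x1 <= xi_tail nu (m x1) (m x2).
Proof.
  unfold xi; rewrite (M_other_spec m x1 (m x2)) by (auto; exists x2; auto).
  destruct Rlt_dec as [Hlt|Hge]; [apply xi_tail_ge, Hnu|].
  apply xi_tail_swap; [exact Hnu|]; pose proof (Htop x2); lra.
Qed.

Theorem V_Lm1_closed_form :
  V_Lm1 I eq_dec enum nu m = / partition m * xi_tail nu (m x1) (m x2).
Proof.
  pose proof (partition_pos m) as HS.
  unfold V_Lm1, maxI; apply maxl_spec.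
  - exists x2; split; [apply Hcomplete|].
    rewrite q_closed_form, xi_non_top by auto; unfold Rdiv; apply Rmult_comm.
  - intros b _; rewrite q_closed_form; unfold Rdiv; rewrite Rmult_comm.
    apply Rmult_le_compat_l; [left; apply Rinv_0_lt_compat, HS|].
    destruct (eq_dec b x1) as [->|Hb]; [exact xi_top_le|].
    rewrite xi_non_top by exact Hb; apply xi_tail_mono; auto.
Qed.
End Ranked.
End Model.

Theorem mainTheorem4 (I : Type) (eq_dec : forall x y : I, {x = y} + {x <> y})
  (enum : list I) (Hnodup : NoDup enum) (Hcomplete : forall x : I, In x enum)
  (Hcard : (2 <= length enum)%nat) (nu : R) (Hnu : 0 < nu < 1) :
  (forall (m : I -> R) (a : I),
      q_Lm1 I eq_dec enum nu m a =
      xi I eq_dec enum nu m a / sumI I enum (fun l => exp (m l))) /\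
  (forall (m : I -> R) (x1 x2 : I),
      x1 <> x2 ->
      (forall b, m b <= m x1) ->
      (forall b, b <> x1 -> m b <= m x2) ->
      V_Lm1 I eq_dec enum nu m =
      / sumI I enum (fun l => exp (m l)) *
      (exp (m x1) + h nu * exp ((m x2 - nu * m x1) / (1 - nu)))).
Proof.
  split.
  - exact (q_closed_form I eq_dec enum Hnodup Hcomplete Hcard nu Hnu).
  - exact (V_Lm1_closed_form I eq_dec enum Hnodup Hcomplete Hcard nu Hnu).
Qed.
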